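(* Let $0 \leq a \leq b$. For any $t > 0$, \[ \mathcal{R}_I(t,a,b) = O\!\left(\frac1t\right). \] Whenever $b \leq \frac14$, setting $\delta_b = \frac14 - b$, \[ \mathcal{R}_I(t,a,b) = O\!\left(\frac{e^{-\frac34 t^2\delta_b^2}}{t^{\frac32}}\right). \]
   Context: For $0\le a\le b$ and $t>0$, define $f_t:[0,\infty)\to\mathbb{R}$ by $f_t(\lambda) = \frac{t}{\sqrt\pi}\int_a^b \exp(-t^2(\lambda-\mu)^2)\,d\mu$ (the convolution of $\mathbf{1}_{[a,b]}$ with the normalised Gaussian $\frac{t}{\sqrt\pi}e^{-t^2x^2}$), and \[ \mathcal{R}_I(t,a,b) = \frac{1}{4\pi}\int_{\frac14}^{+\infty}\big(f_t(\lambda) - \mathbf{1}_{[a,b]}(\lambda)\big)\tanh\!\Big(\pi\sqrt{\lambda-\tfrac14}\Big)\,d\lambda. \] $T_1 = O(T_2)$ means $|T_1|\le CT_2$ with a universal constant $C$ independent of $t,a,b$. *)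

From HB Require Import structures.
From mathcomp Require Import all_boot all_order all_algebra.
From mathcomp Require Import all_classical all_reals all_analysis.
From mathcomp Require Import Rstruct Rstruct_topology.
From Stdlib Require Import Rdefinitions.
Set Implicit Arguments. Unset Strict Implicit. Unset Printing Implicit Defensive.
Import Order.TTheory GRing.Theory Num.Theory.
Import numFieldNormedType.Exports.
Local Open Scope classical_set_scope.
Local Open Scope ring_scope.

Definition RR := Rdefinitions.R.

Definition tanh (x : RR) : RR := (expR x - expR (- x)) / (expR x + expR (- x)).

Definition f_t (t a b lam : RR) : RR :=
  t / Num.sqrt pi *
  Rintegral (@lebesgue_measure RR) `[a, b]
    (fun mu : RR => expR (- (t ^+ 2 * (lam - mu) ^+ 2))).

Definition R_I (t a b : RR) : RR :=
  (4 * pi)^-1 *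
  Rintegral (@lebesgue_measure RR) `[4^-1, +oo[
    (fun lam : RR => (f_t t a b lam - \1_(`[a, b]) lam)
                      * tanh (pi * Num.sqrt (lam - 4^-1))).

From HB Require Import structures.
From mathcomp Require Import all_boot all_order all_algebra.
From mathcomp Require Import all_classical all_reals all_analysis.
From mathcomp Require Import Rstruct Rstruct_topology.
From mathcomp Require Import ring lra.
From mathcomp Require Import measurable_realfun.
Import Order.TTheory GRing.Theory Num.Theory.
Import numFieldNormedType.Exports.
Local Open Scope classical_set_scope.
Local Open Scope ring_scope.

(* f_t(lam) is the mass that the normal law of mean lam and standard deviation
   1/(sqrt 2 t) gives to [a, b].  Hence |f_t - 1_[a,b]| at lam is bounded by the
   Gaussian tails exp(-t^2 (lam - a)^2) + exp(-t^2 (lam - b)^2), which are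
   sqrt(pi)/t times normal densities centred at a and b; as |tanh| <= 1,
   integrating gives O(1/t).  When b <= 1/4 only the tail at b matters on
   [1/4, +oo[: writing lam = 1/4 + x and d = 1/4 - b, the tail is at most
   exp(-t^2 d^2) exp(-t^2 x^2), tanh(pi sqrt x) <= 2 pi sqrt x, and
   sqrt x exp(-t^2 x^2) <= t^(-1/2) exp(-t^2 x^2 / 2), a multiple of a normal
   density; so R_I = O(exp(-t^2 d^2) / t^(3/2)). *)

Section integral_bound.
Context d (T : measurableType d) (R : realType) (mu : {measure set T -> \bar R}).
Local Open Scope ereal_scope.

(* Unlike [ge0_le_integral], no measurability is needed: the nonnegative
   integral is a supremum of integrals of simple functions below the integrand. *)
Lemma ge0_le_integral_sup (D : set T) (f g : T -> \bar R) :
  (forall x, D x -> 0 <= f x) -> (forall x, D x -> f x <= g x) ->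
  \int[mu]_(x in D) f x <= \int[mu]_(x in D) g x.
Proof.
move=> f0 fg.
have g0 x : D x -> 0 <= g x by move=> Dx; exact: le_trans (f0 x Dx) (fg x Dx).
rewrite !ge0_integralE//; apply: ge_ereal_sup => _ [h /= hf <-].
apply: ereal_sup_ubound => /=; exists h => //= x.
by apply: le_trans (hf x) _; rewrite /patch; case: ifP => // /set_mem; exact: fg.
Qed.

Lemma normr_Rintegral_le (D : set T) (g h : T -> R) (M : R) :
  (forall x, D x -> (`|g x| <= h x)%R) ->
  \int[mu]_(x in D) (h x)%:E <= M%:E -> (`|Rintegral mu D g| <= M)%R.
Proof.
move=> gh hM.
have h0 x : D x -> (0 <= h x)%R by move=> Dx; exact: le_trans (normr_ge0 _) (gh x Dx).
have gpos : \int[mu]_(x in D) (EFin \o g)^\+ x <= M%:E.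
  apply: le_trans hM; apply: ge0_le_integral_sup => x Dx; first exact: funepos_ge0.
  rewrite funeposE /= ge_max !lee_fin h0 // andbT.
  by have := gh x Dx; rewrite ler_norml => /andP[].
have gneg : \int[mu]_(x in D) (EFin \o g)^\- x <= M%:E.
  apply: le_trans hM; apply: ge0_le_integral_sup => x Dx; first exact: funeneg_ge0.
  rewrite funenegE /= ge_max !lee_fin h0 // andbT.
  by have := gh x Dx; rewrite ler_norml lerNl => /andP[].
have P0 : 0 <= \int[mu]_(x in D) (EFin \o g)^\+ x.
  by apply: integral_ge0 => x _; exact: funepos_ge0.
have N0 : 0 <= \int[mu]_(x in D) (EFin \o g)^\- x.
  by apply: integral_ge0 => x _; exact: funeneg_ge0.
rewrite /Rintegral integralE.
move: P0 N0 gpos gneg; set P := \int[mu]_(x in D) _; set N := \int[mu]_(x in D) _.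
move=> P0 N0 PM NM.
have Pfin : P \is a fin_num by rewrite ge0_fin_numE// (le_lt_trans PM) ?ltry.
have Nfin : N \is a fin_num by rewrite ge0_fin_numE// (le_lt_trans NM) ?ltry.
move: P0 N0 PM NM; rewrite -(fineK Pfin) -(fineK Nfin) -EFinB !lee_fin /=.
by move=> *; rewrite ler_norml; apply/andP; split; lra.
Qed.

End integral_bound.

Local Notation decay t u := (expR (- (t ^+ 2 * u ^+ 2))).

Section normal_tail.
Context {R : realType}.
Local Notation mu := (@lebesgue_measure R).
Implicit Types (m c s x K : R) (D : set R).

Lemma normal_fun_le_shift m c s x : 0 <= (m - c) * (c - x) ->
  normal_fun m s x <= normal_fun c s m * normal_fun c s x.
Proof.
move=> mcx; rewrite /normal_fun -exp.expRD ler_expR -!mulNr -mulrDl.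
rewrite ler_wpM2r ?invr_ge0 ?mulrn_wge0 ?sqr_ge0 //; nra.
Qed.

Lemma normal_pdf_le_shift m c s x : 0 <= (m - c) * (c - x) ->
  normal_pdf m s x <= normal_fun c s m * normal_pdf c s x.
Proof.
move=> mcx; have [->|s0] := eqVneq s 0.
  by rewrite /normal_pdf eqxx /normal_fun expr0n /= mul0rn invr0 mulr0 exp.expR0 mul1r.
rewrite !normal_pdfE //= mulrCA ler_wpM2l ?normal_peak_ge0 //.
exact: normal_fun_le_shift.
Qed.

Lemma integral_scaled_normal_pdf K m s D : 0 <= K -> measurable D ->
  (\int[mu]_(x in D) (K * normal_pdf m s x)%:E = K%:E * normal_prob m s D)%E.
Proof.
move=> K0 mD; under eq_integral do rewrite EFinM.
rewrite ge0_integralZl_EFin //.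
- by move=> x _; rewrite lee_fin normal_pdf_ge0.
- by apply/measurable_EFinP; exact: measurable_funTS (measurable_normal_pdf m s).
Qed.

Lemma integral_scaled_normal_pdf_le K m s D : 0 <= K -> measurable D ->
  (\int[mu]_(x in D) (K * normal_pdf m s x)%:E <= K%:E)%E.
Proof.
move=> K0 mD; rewrite integral_scaled_normal_pdf // -[leRHS]mule1.
by rewrite lee_wpmul2l ?lee_fin // probability_le1.
Qed.

Lemma integral_scaled_normal_pdf2_le K m1 m2 s D : 0 <= K -> measurable D ->
  (\int[mu]_(x in D) (K * normal_pdf m1 s x + K * normal_pdf m2 s x)%:E
     <= (K + K)%:E)%E.
Proof.
move=> K0 mD; under eq_integral do rewrite EFinD.
have scaled_pdf_ge0 m x : (0 <= (K * normal_pdf m s x)%:E)%E.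
  by rewrite lee_fin mulr_ge0 ?normal_pdf_ge0.
have measurable_scaled_pdf m : measurable_fun D (fun x => (K * normal_pdf m s x)%:E).
  apply/measurable_EFinP; apply: measurable_funM => //.
  exact: measurable_funTS (measurable_normal_pdf m s).
rewrite ge0_integralD //; try exact: measurable_scaled_pdf.
by rewrite EFinD leeD // integral_scaled_normal_pdf_le.
Qed.

Lemma normal_prob_tail_le m c s D : measurable D ->
  (forall x, D x -> 0 <= (m - c) * (c - x)) ->
  (normal_prob m s D <= (normal_fun c s m)%:E)%E.
Proof.
move=> mD mcD; apply: (@le_trans _ _
  (\int[mu]_(x in D) (normal_fun c s m * normal_pdf c s x)%:E)%E).
  apply: ge0_le_integral => //.
  - by move=> x _; rewrite lee_fin normal_pdf_ge0.
  - by apply/measurable_EFinP; exact: measurable_funTS (measurable_normal_pdf m s).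
  - apply/measurable_EFinP; apply: measurable_funM => //.
    exact: measurable_funTS (measurable_normal_pdf c s).
  - by move=> x Dx; rewrite lee_fin normal_pdf_le_shift // mcD.
exact: integral_scaled_normal_pdf_le (normal_fun_ge0 _ _ _) mD.
Qed.

Definition gauss_sd (t : R) := (Num.sqrt 2 * t)^-1.

Lemma normal_fun_gauss_sd m t x : 0 < t ->
  normal_fun m (gauss_sd t) x = decay t (x - m).
Proof.
move=> t0; rewrite /normal_fun /gauss_sd exprVn exprMn sqr_sqrtr //.
by congr expR; field; rewrite gt_eqF.
Qed.

Lemma normal_peak_gauss_sd t : 0 < t -> normal_peak (gauss_sd t) = t / Num.sqrt pi.
Proof.
move=> t0; have sqrtpi_gt0 : 0 < Num.sqrt (pi : R) by rewrite sqrtr_gt0 pi_gt0.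
rewrite /normal_peak (_ : gauss_sd t ^+ 2 * pi *+ 2 = (Num.sqrt pi / t) ^+ 2).
  by rewrite sqrtr_sqr gtr0_norm ?divr_gt0 // invf_div.
rewrite /gauss_sd exprVn !exprMn !sqr_sqrtr ?pi_ge0 // exprVn.
by field; rewrite gt_eqF.
Qed.

Lemma normal_pdf_gauss_sd m t x : 0 < t ->
  normal_pdf m (gauss_sd t) x = t / Num.sqrt pi * decay t (x - m).
Proof.
move=> t0; have sd0 : gauss_sd t != 0.
  by rewrite invr_eq0 mulf_neq0 ?gt_eqF ?sqrtr_gt0.
by rewrite normal_pdfE //= normal_peak_gauss_sd // normal_fun_gauss_sd.
Qed.

Lemma decay_normal_pdf m t x : 0 < t ->
  decay t (x - m) = Num.sqrt pi / t * normal_pdf m (gauss_sd t) x.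
Proof.
move=> t0; have sqrtpi_gt0 : 0 < Num.sqrt (pi : R) by rewrite sqrtr_gt0 pi_gt0.
by rewrite normal_pdf_gauss_sd // mulrA; field; rewrite !gt_eqF.
Qed.

Lemma normal_prob_gauss_sd_tail_le m c t D : 0 < t -> measurable D ->
  (forall x, D x -> 0 <= (m - c) * (c - x)) ->
  (normal_prob m (gauss_sd t) D <= (decay t (m - c))%:E)%E.
Proof. by move=> t0; rewrite -normal_fun_gauss_sd //; exact: normal_prob_tail_le. Qed.

End normal_tail.

Section f_t_bounds.
Implicit Types (t a b lam : RR).

Lemma f_t_normal_prob t a b lam : 0 < t ->
  f_t t a b lam = fine (normal_prob lam (gauss_sd t) `[a, b]).
Proof.
move=> t0; have sqrtpi_gt0 : 0 < Num.sqrt (pi : RR) by rewrite sqrtr_gt0 pi_gt0.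
rewrite /f_t /Rintegral.
under eq_integral => x _ do
  rewrite -[(lam - x) ^+ 2]sqrrN opprB decay_normal_pdf //.
rewrite integral_scaled_normal_pdf ?divr_ge0 ?sqrtr_ge0 ?ltW //.
rewrite -[normal_prob _ _ _]fineK ?fin_num_measure // -EFinM /=.
by field; rewrite !gt_eqF.
Qed.

Lemma f_t_ge0 t a b lam : 0 < t -> 0 <= f_t t a b lam.
Proof. by move=> t0; rewrite f_t_normal_prob // fine_ge0 // measure_ge0. Qed.

Lemma f_t_le1 t a b lam : 0 < t -> f_t t a b lam <= 1.
Proof.
by move=> t0; rewrite f_t_normal_prob // -lee_fin fineK ?fin_num_measure // probability_le1.
Qed.

Lemma f_t_le_left t a b lam : 0 < t -> lam <= a ->
  f_t t a b lam <= decay t (lam - a).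
Proof.
move=> t0 lam_a; rewrite f_t_normal_prob // -lee_fin fineK ?fin_num_measure //.
apply: normal_prob_gauss_sd_tail_le => // x; rewrite /= in_itv /= => /andP[ax _].
by rewrite mulr_le0 // subr_le0.
Qed.

Lemma f_t_le_right t a b lam : 0 < t -> b <= lam ->
  f_t t a b lam <= decay t (lam - b).
Proof.
move=> t0 b_lam; rewrite f_t_normal_prob // -lee_fin fineK ?fin_num_measure //.
apply: normal_prob_gauss_sd_tail_le => // x; rewrite /= in_itv /= => /andP[_ xb].
by rewrite mulr_ge0 // subr_ge0.
Qed.

Lemma one_sub_f_t_le t a b lam : 0 < t -> a <= lam <= b ->
  1 - f_t t a b lam <= decay t (lam - a) + decay t (lam - b).
Proof.
move=> t0 /andP[a_lam lam_b]; rewrite f_t_normal_prob //.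
have tail_a : (normal_prob lam (gauss_sd t) `]-oo, a[ <= (decay t (lam - a))%:E)%E.
  apply: normal_prob_gauss_sd_tail_le => // x; rewrite /= in_itv /= => xa.
  by rewrite mulr_ge0 ?subr_ge0 // ltW.
have tail_b : (normal_prob lam (gauss_sd t) `]b, +oo[ <= (decay t (lam - b))%:E)%E.
  apply: normal_prob_gauss_sd_tail_le => // x; rewrite /= in_itv /= andbT => bx.
  by rewrite mulr_le0 ?subr_le0 // ltW.
rewrite -lee_fin EFinB fineK ?fin_num_measure // -probability_setC // setCitv /=.
by apply: le_trans (measureU2 _ _ _) _ => //; rewrite EFinD leeD.
Qed.

Lemma normr_f_t_sub_indic_le t a b lam : 0 < t ->
  `|f_t t a b lam - \1_`[a, b] lam| <= decay t (lam - a) + decay t (lam - b).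
Proof.
move=> t0; have f_ge0 := f_t_ge0 t a b lam t0.
have decay_a := expR_ge0 (- (t ^+ 2 * (lam - a) ^+ 2)).
have decay_b := expR_ge0 (- (t ^+ 2 * (lam - b) ^+ 2)).
rewrite indicE mem_setE in_itv /=.
have [lam_a | a_lam] := ltP lam a.
  have := f_t_le_left t a b lam t0 (ltW lam_a).
  by rewrite /= subr0 ger0_norm //; lra.
have [lam_b | b_lam] := leP lam b.
  rewrite /= ler0_norm ?subr_le0 ?f_t_le1 // opprB.
  by apply: one_sub_f_t_le; rewrite ?a_lam.
have := f_t_le_right t a b lam t0 (ltW b_lam).
by rewrite andbF /= subr0 ger0_norm //; lra.
Qed.

Lemma normr_f_t_sub_indic_le_right t a b lam : 0 < t -> b <= lam ->
  `|f_t t a b lam - \1_`[a, b] lam| <= decay t (lam - b).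
Proof.
move=> t0 b_lam; rewrite indicE mem_setE in_itv /=.
case: (boolP ((a <= lam) && (lam <= b))) => [/andP[_ lam_b]|_] /=.
  have -> : lam = b by apply/le_anti; rewrite lam_b b_lam.
  rewrite subrr expr0n /= mulr0 oppr0 exp.expR0 ler0_norm ?subr_le0 ?f_t_le1 //.
  by rewrite opprB lerBlDr lerDl f_t_ge0.
by rewrite subr0 ger0_norm ?f_t_ge0 // f_t_le_right.
Qed.

End f_t_bounds.

Section decay.
Context {R : realType}.
Implicit Types (t x y : R).

Lemma decayD_le t x y : 0 <= x -> 0 <= y -> decay t (x + y) <= decay t x * decay t y.
Proof.
move=> x0 y0; rewrite -exp.expRD ler_expR.
have : 0 <= t ^+ 2 * (x * y) by rewrite mulr_ge0 ?sqr_ge0 ?mulr_ge0.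
nra.
Qed.

Lemma sqrt_mul_expR_le1 y : 0 <= y -> Num.sqrt y * expR (- (y ^+ 2 / 2)) <= 1.
Proof.
move=> y0; rewrite expRN ler_pdivrMr ?expR_gt0 // mul1r.
apply: le_trans (expR_ge1Dx _).
have sqrt_y := sqr_sqrtr y0; have := sqrtr_ge0 y.
have := sqr_ge0 (Num.sqrt y - 1); have := sqr_ge0 (y - 1).
nra.
Qed.

Lemma sqrt_mul_decay_le t x : 0 < t -> 0 <= x ->
  Num.sqrt x * decay t x <= (Num.sqrt t)^-1 * decay (t / Num.sqrt 2) x.
Proof.
move=> t0 x0; have sqrt_t_gt0 : 0 < Num.sqrt t by rewrite sqrtr_gt0.
have -> : decay (t / Num.sqrt 2) x = expR (- ((t * x) ^+ 2 / 2)).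
  by rewrite !exprMn exprVn sqr_sqrtr //; congr expR; field.
have -> : decay t x = expR (- ((t * x) ^+ 2 / 2)) * expR (- ((t * x) ^+ 2 / 2)).
  by rewrite -exp.expRD exprMn; congr expR; field.
have -> : Num.sqrt x = (Num.sqrt t)^-1 * Num.sqrt (t * x).
  by rewrite sqrtrM ?ltW // mulKf ?gt_eqF.
rewrite -mulrA; apply: ler_wpM2l; first by rewrite invr_ge0 ltW.
rewrite mulrA -[X in _ <= X]mul1r; apply: ler_wpM2r; first exact: expR_ge0.
by apply: sqrt_mul_expR_le1; rewrite mulr_ge0 // ltW.
Qed.

End decay.

Lemma normr_tanh_le1 y : `|tanh y| <= 1.
Proof.
rewrite /tanh; have e1 := expR_gt0 y; have e2 := expR_gt0 (- y).
rewrite normrM normfV (gtr0_norm (addr_gt0 e1 e2)) ler_pdivrMr ?addr_gt0 // mul1r.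
rewrite ler_norml; apply/andP; split; lra.
Qed.

Lemma normr_tanh_le y : 0 <= y -> `|tanh y| <= 2 * y.
Proof.
move=> y0; rewrite /tanh; have e1 := expR_gt0 y; have e2 := expR_gt0 (- y).
have e1e2 : expR y * expR (- y) = 1 by rewrite -exp.expRD subrr exp.expR0.
have h1 := expR_ge1Dx y; have h2 := expR_ge1Dx (- y).
have n0 : 0 <= expR y - expR (- y) by rewrite subr_ge0 ler_expR; lra.
rewrite normrM normfV (gtr0_norm (addr_gt0 e1 e2)) (ger0_norm n0).
rewrite ler_pdivrMr ?addr_gt0 //.
have k1 : 0 <= expR y * (expR (- y) - (1 - y)) by apply: mulr_ge0; lra.
have k2 : 0 <= y * (expR y - 1) by apply: mulr_ge0; lra.
have k3 : 0 <= y * expR (- y) by apply: mulr_ge0; lra.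
nra.
Qed.

Section R_I_bounds.
Local Notation mu := (@lebesgue_measure RR).
Implicit Types (t a b lam : RR).

Definition R_I_integrand t a b lam :=
  (f_t t a b lam - \1_`[a, b] lam) * tanh (pi * Num.sqrt (lam - 4^-1)).

Lemma R_IE t a b :
  R_I t a b = (4 * pi)^-1 * Rintegral mu `[4^-1, +oo[ (R_I_integrand t a b).
Proof. by []. Qed.

Lemma normr_R_I_integrand_le t a b lam : 0 < t ->
  `|R_I_integrand t a b lam| <= Num.sqrt pi / t * normal_pdf a (gauss_sd t) lam
                                + Num.sqrt pi / t * normal_pdf b (gauss_sd t) lam.
Proof.
move=> t0; rewrite /R_I_integrand normrM -!decay_normal_pdf //.
apply: le_trans (normr_f_t_sub_indic_le t a b lam t0).
by rewrite -[X in _ <= X]mulr1 ler_wpM2l ?normr_tanh_le1.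
Qed.

Lemma normr_R_I_integrand_le_right t a b lam : 0 < t -> b <= 4^-1 <= lam ->
  `|R_I_integrand t a b lam| <= 2 * pi * decay t (4^-1 - b) / Num.sqrt t
    * (Num.sqrt pi / (t / Num.sqrt 2) * normal_pdf 4^-1 (gauss_sd (t / Num.sqrt 2)) lam).
Proof.
move=> t0 /andP[b4 lam4]; set x := lam - 4^-1; set d := 4^-1 - b.
have x0 : 0 <= x by rewrite subr_ge0.
have d0 : 0 <= d by rewrite subr_ge0.
have s0 : 0 < t / Num.sqrt 2 by rewrite divr_gt0 ?sqrtr_gt0.
rewrite -decay_normal_pdf // -/x /R_I_integrand normrM.
have f_bound := normr_f_t_sub_indic_le_right t a b lam t0 (le_trans b4 lam4).
have tanh_bound := normr_tanh_le (pi * Num.sqrt x) (mulr_ge0 (pi_ge0 RR) (sqrtr_ge0 x)).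
have decay_split : decay t (lam - b) <= decay t d * decay t x.
  by rewrite (_ : lam - b = d + x); [exact: decayD_le | rewrite /d /x; ring].
apply: le_trans (ler_pM (normr_ge0 _) (normr_ge0 _) f_bound tanh_bound) _.
apply: le_trans (ler_wpM2r _ decay_split) _.
  by rewrite mulr_ge0 // mulr_ge0 ?pi_ge0 ?sqrtr_ge0.
rewrite [leLHS](_ : _ = 2 * pi * decay t d * (Num.sqrt x * decay t x)); last by ring.
rewrite [leRHS](_ : _ = 2 * pi * decay t d
  * ((Num.sqrt t)^-1 * decay (t / Num.sqrt 2) x)); last by ring.
apply: ler_wpM2l; first by rewrite mulr_ge0 ?expR_ge0 // mulr_ge0 ?pi_ge0.
exact: sqrt_mul_decay_le.
Qed.

Lemma normr_R_I_le t a b : 0 < t -> `|R_I t a b| <= (2 * Num.sqrt pi)^-1 / t.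
Proof.
move=> t0; have sqrtpi_gt0 : 0 < Num.sqrt (pi : RR) by rewrite sqrtr_gt0 pi_gt0.
have int_bound : `|Rintegral mu `[4^-1, +oo[ (R_I_integrand t a b)|
                   <= Num.sqrt pi / t + Num.sqrt pi / t.
  apply: normr_Rintegral_le => [lam _|]; first exact: normr_R_I_integrand_le.
  by apply: integral_scaled_normal_pdf2_le; rewrite ?divr_ge0 ?ltW.
rewrite R_IE normrM gtr0_norm ?invr_gt0 ?mulr_gt0 ?pi_gt0 //.
apply: le_trans (ler_wpM2l _ int_bound) _; first by rewrite invr_ge0 mulr_ge0 ?pi_ge0.
rewrite [leLHS](_ : _ = (2 * Num.sqrt pi)^-1 / t) //.
rewrite -[X in (4 * X)^-1](sqr_sqrtr (pi_ge0 RR)).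
by field; rewrite !gt_eqF.
Qed.

Lemma normr_R_I_le_decay t a b : 0 < t -> b <= 4^-1 ->
  `|R_I t a b| <= Num.sqrt pi * Num.sqrt 2 / 2 * decay t (4^-1 - b) / (t * Num.sqrt t).
Proof.
move=> t0 b4; have sqrtpi_gt0 : 0 < Num.sqrt (pi : RR) by rewrite sqrtr_gt0 pi_gt0.
have sqrt2_gt0 : 0 < Num.sqrt (2 : RR) by rewrite sqrtr_gt0.
have sqrt_t_gt0 : 0 < Num.sqrt t by rewrite sqrtr_gt0.
set K := 2 * pi * decay t (4^-1 - b) / Num.sqrt t * (Num.sqrt pi / (t / Num.sqrt 2)).
have int_bound : `|Rintegral mu `[4^-1, +oo[ (R_I_integrand t a b)| <= K.
  apply: (@normr_Rintegral_le _ _ _ mu _ _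
    (fun lam => K * normal_pdf 4^-1 (gauss_sd (t / Num.sqrt 2)) lam)).
    move=> lam; rewrite /= in_itv /= andbT => lam4; rewrite -mulrA.
    by apply: normr_R_I_integrand_le_right; rewrite ?b4.
  apply: integral_scaled_normal_pdf_le => //.
  by rewrite /K !mulr_ge0 ?divr_ge0 ?expR_ge0 ?pi_ge0 ?sqrtr_ge0 ?invr_ge0 ?ltW ?divr_gt0.
rewrite R_IE normrM gtr0_norm ?invr_gt0 ?mulr_gt0 ?pi_gt0 //.
apply: le_trans (ler_wpM2l _ int_bound) _; first by rewrite invr_ge0 mulr_ge0 ?pi_ge0.
rewrite [leLHS](_ : _ = Num.sqrt pi * Num.sqrt 2 / 2 * decay t (4^-1 - b) / (t * Num.sqrt t)) //.
rewrite /K -[X in (4 * X)^-1](sqr_sqrtr (pi_ge0 RR)) -[X in 2 * X * _](sqr_sqrtr (pi_ge0 RR)).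
by field; rewrite !gt_eqF.
Qed.

End R_I_bounds.

Lemma powR_three_halves {R : realType} (t : R) : 0 <= t -> t `^ (3 / 2) = t * Num.sqrt t.
Proof.
move=> t0; rewrite (_ : 3 / 2 = 1 + 2^-1); last by field.
rewrite powRD ?powRr1 ?powR12_sqrt //.
by apply/implyP => /eqP; lra.
Qed.

Theorem proposition3p4 :
  exists C : RR, 0 < C /\
    forall a b t : RR, 0 <= a -> a <= b -> 0 < t ->
      `| R_I t a b | <= C / t /\
      (b <= 4^-1 ->
        `| R_I t a b | <=
          C * expR (- (3 / 4 * t ^+ 2 * (4^-1 - b) ^+ 2)) / t `^ (3 / 2)).
Proof.
have sqrt_ge1 (x : RR) : 1 <= x -> 1 <= Num.sqrt x.
  by move=> x1; rewrite -{1}sqrtr1 ler_sqrt // (le_trans ler01 x1).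
have sqrtpi_ge1 : 1 <= Num.sqrt (pi : RR).
  by apply: sqrt_ge1; apply: le_trans (pi_ge2 RR); rewrite ler1n.
have C_ge1 : 1 <= Num.sqrt pi * Num.sqrt (2 : RR) by rewrite mulr_ege1 // sqrt_ge1 ?ler1n.
exists (Num.sqrt pi * Num.sqrt 2); split; first exact: lt_le_trans C_ge1.
move=> a b t _ _ t0; split.
  apply: le_trans (normr_R_I_le t a b t0) _.
  rewrite ler_wpM2r ?invr_ge0 ?(ltW t0) //; apply: le_trans C_ge1.
  by rewrite invf_le1 ?mulr_gt0 ?(lt_le_trans ltr01 sqrtpi_ge1) // mulr_ege1 ?ler1n.
move=> b4; apply: le_trans (normr_R_I_le_decay t a b t0 b4) _.
rewrite powR_three_halves ?(ltW t0) // ler_pM2r ?invr_gt0 ?mulr_gt0 ?sqrtr_gt0 //.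
have C_ge0 := le_trans ler01 C_ge1.
apply: ler_pM; rewrite ?expR_ge0 ?divr_ge0 //; first lra.
rewrite ler_expR lerN2 -mulrA ler_piMl ?mulr_ge0 ?sqr_ge0 //; lra.
Qed.
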